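(* Let $G=A(n,\theta)$ with $n\ge3$ odd, and let $x\in G$ have order $4$. Then $x^2\notin[x,G]$; consequently the image of $x$ in $G/[x,G]$ has order $4$.
   Context: Let $n=2m+1$ be odd, $\mathbb{F}_{2^n}$ the field with $2^n$ elements, $\theta$ a generator of $\mathrm{Gal}(\mathbb{F}_{2^n}/\mathbb{F}_2)$, $a^\theta$ the image of $a$ under $\theta$. $G=A(n,\theta)$ is the group of matrices $\begin{bmatrix}1&a&b\\0&1&a^\theta\\0&0&1\end{bmatrix}$, $a,b\in\mathbb{F}_{2^n}$, denoted $(a,b)$, with $(a,b)(c,d)=(a+c,\,b+d+ac^\theta)$. For $x\in G$, $[x,G]$ denotes the subgroup generated by all commutators $x^{-1}g^{-1}xg$, $g\in G$. *)

From HB Require Import structures.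
From mathcomp Require Import all_boot all_order all_algebra all_fingroup all_solvable all_field.
Set Implicit Arguments. Unset Strict Implicit. Unset Printing Implicit Defensive.
Import GRing.Theory.

Definition Amat (F : finFieldType) (theta : F -> F) (a b : F) : 'M[F]_3 :=
  \matrix_(i < 3, j < 3)
    (if i == j then 1%R
     else if (i == 0 :> nat) && (j == 1 :> nat) then a
     else if (i == 0 :> nat) && (j == 2 :> nat) then b
     else if (i == 1 :> nat) && (j == 2 :> nat) then theta a
     else 0%R).

Definition Aset (F : finFieldType) (theta : F -> F) : {set {'GL_3[F]}} :=
  [set g : {'GL_3[F]} | [exists a : F, exists b : F, GLval g == Amat theta a b]].

Definition commx (gT : finGroupType) (x : gT) (G : {set gT}) : {set gT} :=
  (<<[set [~ x, g] | g in G]>>)%g.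

(* theta is a generator of Gal(F/F_2) when #|F| = 2^n: a field automorphism
   whose iterates theta^k, 0 < k < n, are all different from the identity
   (theta^n = id automatically, the Galois group being of order n). *)
Definition gal_generator (F : finFieldType) (n : nat) (theta : {rmorphism F -> F}) :=
  forall k, 0 < k < n -> exists a : F, iter k theta a != a.

From mathcomp Require Import all_boot all_order all_algebra all_fingroup all_solvable all_field.
From HB Require Import structures.
From mathcomp Require Import ring.
Set Implicit Arguments. Unset Strict Implicit. Unset Printing Implicit Defensive.
Import GRing.Theory.

(* For x = (a, b) one has x^2 = (0, a a^theta) and [x, (c, d)] = (0, a c^theta + c a^theta),
   so [x, G] consists of central elements of that shape.  If x^2 were among them, u = c / a
   would satisfy u^theta = u + 1, whence u = u^(theta^n) = u + n = u + 1 since n is odd. *)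

Local Open Scope ring_scope.

(* Any ring endomorphism of a field of order p^n is an element of Gal(F / F_p), a group of
   order n. *)
Lemma iter_rmorph_card_id (F : finFieldType) (p n : nat) (theta : {rmorphism F -> F}) :
  prime p -> #|F| = (p ^ n)%N -> forall v, iter n theta v = v.
Proof.
move=> p_pr cardF.
have charFp : p \in [pchar F] by apply: card_finPcharP cardF p_pr.
pose L := pPrimeCharType charFp.
pose f : L -> L := theta.
have fA : zmod_morphism f by move=> x y; rewrite /f rmorphB.
have fM : monoid_morphism f by split=> [|x y]; rewrite /f ?rmorph1 ?rmorphM.
have fZ : scalable f.
  by move=> a x; rewrite /f /= /pprimeChar_scale rmorphM rmorph_nat.
pose fLR : {lrmorphism L -> L} := HB.pack f (GRing.isZmodMorphism.Build _ _ f fA)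
  (GRing.isMonoidMorphism.Build _ _ f fM) (GRing.isScalable.Build _ _ _ _ f fZ).
have /kAut_to_gal[alpha gal_alpha Dalpha] : kAut 1 {:L} (linfun fLR).
  rewrite kAutfE; apply/kHomP_tmp; split=> [x /vlineP[a ->] | x y _ _]; rewrite !lfunE //=.
    by rewrite (fZ a 1) /f rmorph1.
  exact: (rmorphM fLR).
have {}Dalpha : alpha =1 f by move=> a; rewrite -Dalpha ?memvf ?lfunE.
have card_gal : #|('Gal({:L} / 1))%g| = n.
  rewrite -(galois_dim (finField_galois (sub1v _))) dimv1 divn1.
  by rewrite pprimeChar_dimf [#|_|]cardF pfactorK.
have alpha_n : (alpha ^+ n)%g = 1%g.
  by apply/eqP; rewrite -order_dvdn -card_gal (order_dvdG gal_alpha).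
have iter_alpha k v : (alpha ^+ k)%g v = iter k theta v.
  elim: k => [|k IHk]; first by rewrite expg0 gal_id.
  by rewrite expgSr galM ?memvf // IHk Dalpha.
by move=> v; rewrite -iter_alpha alpha_n gal_id.
Qed.

Lemma rmorph_neq_add1 (F : fieldType) (n : nat) (theta : {rmorphism F -> F}) (u : F) :
  (forall v, iter n theta v = v) -> n%:R != 0 :> F -> theta u != u + 1.
Proof.
move=> theta_n n_neq0; apply/eqP => theta_u.
have iter_u k : iter k theta u = u + k%:R.
  elim: k => [|k IHk]; first by rewrite addr0.
  by rewrite iterS IHk rmorphD theta_u rmorph_nat -natr1; ring.
by move/eqP: (theta_n u); rewrite iter_u -subr_eq0 addrC addKr (negPf n_neq0).
Qed.

Section MatrixGroup.

Variables (F : finFieldType) (theta : {rmorphism F -> F}).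

Lemma AmatM a b c d :
  Amat theta a b * Amat theta c d = Amat theta (a + c) (b + d + a * theta c) :> 'M_3.
Proof.
apply/matrixP => i j; rewrite !mxE !big_ord_recr big_ord0 /= !mxE rmorphD.
by case: i => [[|[|[|i]]] Hi] //; case: j => [[|[|[|j]]] Hj] //=; ring.
Qed.

Lemma Amat00 : Amat theta 0 0 = 1 :> 'M_3.
Proof.
apply/matrixP => i j; rewrite !mxE rmorph0.
by case: i => [[|[|[|i]]] Hi] //; case: j => [[|[|[|j]]] Hj].
Qed.

Lemma Amat_inj a b a' b' : Amat theta a b = Amat theta a' b' -> a = a' /\ b = b'.
Proof. by move/matrixP => E; move: (E 0 1) (E 0 2); rewrite !mxE /= => -> ->. Qed.

Lemma AmatV (g : {'GL_3[F]}) c d :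
  GLval g = Amat theta c d -> GLval (g^-1)%g = Amat theta (- c) (- d + c * theta c).
Proof.
move=> Dg; have gK : GLval g * Amat theta (- c) (- d + c * theta c) = 1.
  by rewrite Dg AmatM -Amat00 rmorphN; congr (Amat _ _ _); ring.
by rewrite GL_VE -[RHS](mulKr (GL_unit g)) gK mulr1.
Qed.

Variable a : F.

Definition Acomm : {set {'GL_3[F]}} :=
  [set g : {'GL_3[F]} | [exists c, GLval g == Amat theta 0 (a * theta c - c * theta a)]].

Lemma group_set_Acomm : group_set Acomm.
Proof.
apply/group_setP; split.
  by rewrite inE; apply/existsP; exists 0; rewrite GL_1E rmorph0 mulr0 mul0r subrr Amat00.
move=> g h; rewrite !inE => /existsP[c /eqP Dg] /existsP[c' /eqP Dh].
apply/existsP; exists (c + c'); rewrite GL_ME Dg Dh AmatM.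
by apply/eqP; congr (Amat _ _ _); rewrite ?rmorphD ?rmorph0; ring.
Qed.

Canonical Acomm_group := Group group_set_Acomm.

Lemma commx_sub_Acomm (x : {'GL_3[F]}) b :
  GLval x = Amat theta a b -> commx x (Aset theta) \subset Acomm.
Proof.
move=> Dx; rewrite /commx (gen_subG _ Acomm_group); apply/subsetP => k /imsetP[g].
rewrite inE => /existsP[c /existsP[d /eqP Dg]] ->; rewrite inE; apply/existsP; exists c.
rewrite /commg /conjg !GL_ME (AmatV Dx) (AmatV Dg) Dx Dg !AmatM.
by apply/eqP; congr (Amat _ _ _); rewrite ?rmorphD ?rmorphN; ring.
Qed.

Lemma Acomm_sub_cent1 (x : {'GL_3[F]}) b :
  GLval x = Amat theta a b -> Acomm \subset 'C[x]%g.
Proof.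
move=> Dx; apply/subsetP => h; rewrite inE => /existsP[c /eqP Dh].
apply/cent1P/val_inj; change (GLval (h * x)%g = GLval (x * h)%g).
rewrite !GL_ME Dh Dx !AmatM.
by congr (Amat _ _ _); rewrite ?rmorph0; ring.
Qed.

Lemma Amat_sqr_notin_Acomm n c :
  a != 0 -> (forall v, iter n theta v = v) -> n%:R != 0 :> F ->
  a * theta a != a * theta c - c * theta a.
Proof.
move=> a_neq0 theta_n n_neq0; apply: contra (rmorph_neq_add1 (c / a) theta_n n_neq0).
rewrite fmorph_div => /eqP Dc; have theta_a_neq0 : theta a != 0 by rewrite fmorph_eq0.
have -> : theta c = (a * theta a + c * theta a) / a by rewrite Dc; field.
by apply/eqP; field; rewrite a_neq0 theta_a_neq0.
Qed.

End MatrixGroup.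

Local Close Scope ring_scope.

Lemma order_coset_pfactor (gT : finGroupType) (H : {group gT}) (x : gT) p k :
  prime p -> x \in 'N(H)%g -> #[x]%g = p ^ k.+1 -> (x ^+ (p ^ k))%g \notin H ->
  #[coset H x]%g = p ^ k.+1.
Proof.
move=> p_pr Nx ox xpk_notin.
have : #[coset H x]%g %| p ^ k.+1 by rewrite -ox morph_order.
case/(dvdn_pfactor _ _ p_pr) => j; rewrite leq_eqVlt => /orP[/eqP -> // | j_le_k] oxH.
case/negP: xpk_notin; apply: coset_idr; first exact: groupX.
by rewrite morphX //; apply/eqP; rewrite -order_dvdn oxH dvdn_exp2l.
Qed.

Theorem mainTheorem11 (F : finFieldType) (m : nat) (theta : {rmorphism F -> F})
  (x : {'GL_3[F]}) :
  let n := (2 * m).+1 in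
  3 <= n ->
  #|F| = 2 ^ n ->
  gal_generator n theta ->
  x \in Aset theta ->
  #[x]%g = 4 ->
  (x ^+ 2)%g \notin commx x (Aset theta) /\
  #[coset (commx x (Aset theta)) x]%g = 4.
Proof.
move=> n _ cardF _ /[!inE] /existsP[a /existsP[b /eqP Dx]] ox.
have char2 : 2 \in [pchar F]%R by apply: card_finPcharP cardF _.
have n_neq0 : (n%:R != 0 :> F)%R.
  by rewrite /n -addn1 natrD natrM (pcharf0 char2) mul0r add0r oner_eq0.
have Dx2 : (GLval (x ^+ 2)%g = Amat theta 0 (a * theta a))%R.
  by rewrite expgS expg1 GL_ME Dx AmatM !addrr_pchar2 ?add0r.
have a_neq0 : (a != 0)%R.
  apply/eqP => a0; have /eqP : (x ^+ 2 = 1)%g.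
    apply: val_inj; change (GLval (x ^+ 2)%g = GLval 1%g).
    by rewrite Dx2 a0 mul0r Amat00 GL_1E.
  by rewrite -order_dvdn ox.
have x2_notin : (x ^+ 2)%g \notin commx x (Aset theta).
  apply/negP => /(subsetP (commx_sub_Acomm Dx)); rewrite inE => /existsP[c /eqP].
  rewrite Dx2 => /Amat_inj[_ /eqP]; apply/negP.
  by apply: Amat_sqr_notin_Acomm a_neq0 _ n_neq0; apply: iter_rmorph_card_id cardF.
split=> //; apply: (@order_coset_pfactor _ (generated_group _) _ 2 1) => //.
apply: subsetP (cent_sub _) _ _; rewrite -sub_cent1.
exact: subset_trans (commx_sub_Acomm Dx) (Acomm_sub_cent1 Dx).
Qed.
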